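(* Let $p,q\in\mathbb{C}$ and let $\phi:\mathbb{R}^4\ni(u,s,v,t)\mapsto(u_2,s_2,v_1,t_1)\in\mathbb{R}^4$ be the map defined by $$u_2=v+t\frac{p-q}{s-t},\qquad v_1=u+s\frac{p-q}{s-t},\qquad s_2=\frac{1}{t}+\frac{p-q}{t(u-v)},\qquad t_1=\frac{1}{s}+\frac{p-q}{s(u-v)}.$$ Set $n(u,s,v,t)=(p-q+u-v)t-s(u-v)$ and $d(u,s,v,t)=(p-q+u-v)s-t(u-v)$. Then: (1) $\phi$ is measure preserving with density $m(u,s,v,t)=n(u,s,v,t)\,d(u,s,v,t)$; (2) $\phi$ preserves the Poisson structure $$\Omega=n\,\frac{s}{t}\,\frac{\partial}{\partial u}\wedge\frac{\partial}{\partial s}-d\,\frac{\partial}{\partial u}\wedge\frac{\partial}{\partial t}-n\,\frac{s}{t}\,\frac{\partial}{\partial s}\wedge\frac{\partial}{\partial v}-d\,\frac{\partial}{\partial v}\wedge\frac{\partial}{\partial t},$$ where $n=n(u,s,v,t)$, $d=d(u,s,v,t)$; (3) $\phi$ is a Liouville integrable map.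
   Context: A map $\phi:(u,s,v,t)\mapsto(u_2,s_2,v_1,t_1)$ is called measure preserving with density $m$ if $m(u_2,s_2,v_1,t_1)=\dfrac{\partial(u_2,s_2,v_1,t_1)}{\partial(u,s,v,t)}\,m(u,s,v,t)$, where the fraction denotes the Jacobian determinant of $\phi$. Liouville integrability of a map is meant in the standard sense (preservation of a Poisson structure together with a sufficient number of functionally independent invariants in involution). *)

From HB Require Import structures.
From mathcomp Require Import all_boot all_order all_algebra.
From mathcomp Require Import all_classical all_reals all_analysis.
Import numFieldNormedType.Exports.
Set Implicit Arguments. Unset Strict Implicit. Unset Printing Implicit Defensive.
Import Order.TTheory GRing.Theory Num.Theory.
Local Open Scope ring_scope.
Local Open Scope classical_set_scope.

Section Defs.
Variable R : realType.

(** Points of R^n are row vectors 'rV[R]_n; coordinate i of x is x 0 i. *)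

Definition pd n (F : 'rV[R]_n -> R) (j : 'I_n) (x : 'rV[R]_n) : R :=
  'D_(delta_mx 0 j) F x.

Definition jacobian n (phi : 'rV[R]_n -> 'rV[R]_n) (x : 'rV[R]_n) : 'M[R]_n :=
  \matrix_(i, j) pd (fun y => phi y 0 i) j x.

Definition measure_preserving n (phi : 'rV[R]_n -> 'rV[R]_n)
    (U : set 'rV[R]_n) (m : 'rV[R]_n -> R) : Prop :=
  forall x, U x -> m (phi x) = \det (jacobian phi x) * m x.

(** A bivector field P (P x i j = coefficient of d/dx_i /\ d/dx_j,
    skew-symmetric matrix) is a Poisson structure on U:
    smooth enough (differentiable entries), skew, and Jacobi identity. *)
Definition is_poisson n (P : 'rV[R]_n -> 'M[R]_n) (U : set 'rV[R]_n) : Prop :=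
  (forall x, U x -> forall i j, differentiable (fun y => P y i j) x) /\
  (forall x, U x -> (P x)^T = - P x) /\
  (forall x, U x -> forall i j k,
      \sum_l (P x i l * pd (fun y => P y j k) l x
            + P x j l * pd (fun y => P y k i) l x
            + P x k l * pd (fun y => P y i j) l x) = 0).

(** phi preserves the bivector P: phi_* P = P, i.e.
    P(phi x) = J(x) P(x) J(x)^T wherever x and phi x lie in U. *)
Definition preserves_poisson n (phi : 'rV[R]_n -> 'rV[R]_n)
    (U : set 'rV[R]_n) (P : 'rV[R]_n -> 'M[R]_n) : Prop :=
  forall x, U x -> U (phi x) ->
    P (phi x) = jacobian phi x *m P x *m (jacobian phi x)^T.

Definition grad n (F : 'rV[R]_n -> R) (x : 'rV[R]_n) : 'rV[R]_n :=
  \row_j pd F j x.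

Definition pbracket n (P : 'rV[R]_n -> 'M[R]_n) (F G : 'rV[R]_n -> R)
    (x : 'rV[R]_n) : R :=
  (grad F x *m P x *m (grad G x)^T) 0 0.

(** Liouville integrability of phi on its (open) domain U:
    there is a Poisson structure P on U preserved by phi, of (maximal) rank
    2r, and k = n - r invariants I_1..I_k of phi which are differentiable,
    functionally independent (gradients linearly independent on a dense
    subset of U) and pairwise in involution. *)
Definition liouville_integrable n (phi : 'rV[R]_n -> 'rV[R]_n)
    (U : set 'rV[R]_n) : Prop :=
  exists (P : 'rV[R]_n -> 'M[R]_n) (r : nat),
    is_poisson P U /\ preserves_poisson phi U P /\
    (forall x, U x -> (\rank (P x) <= r.*2)%N) /\
    (exists x, U x /\ \rank (P x) = r.*2) /\
    exists I : 'I_(n - r) -> 'rV[R]_n -> R,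
      (forall a x, U x -> differentiable (I a) x) /\
      (forall a x, U x -> U (phi x) -> I a (phi x) = I a x) /\
      U `<=` closure [set x | U x /\ row_free (\matrix_(a < n - r) grad (I a) x)] /\
      (forall a b x, U x -> pbracket P (I a) (I b) x = 0).

(** The specific map of the statement, coordinates (u,s,v,t) = x 0 0..3,
    with c = p - q. *)
Section Map.
Variable c : R.
Definition cu (x : 'rV[R]_4) := x 0 0.
Definition cs (x : 'rV[R]_4) := x 0 1.
Definition cv (x : 'rV[R]_4) := x 0 2.
Definition ct (x : 'rV[R]_4) := x 0 3.

Definition phi_map (x : 'rV[R]_4) : 'rV[R]_4 :=
  let u := cu x in let s := cs x in let v := cv x in let t := ct x in
  \row_(i < 4) [:: v + t * (c / (s - t));
                   t^-1 + c / (t * (u - v));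
                   u + s * (c / (s - t));
                   s^-1 + c / (s * (u - v))]`_i.

Definition phi_dom : set 'rV[R]_4 :=
  [set x | cs x != ct x /\ ct x != 0 /\ cs x != 0 /\ cu x != cv x].

Definition nfun (x : 'rV[R]_4) : R :=
  (c + cu x - cv x) * ct x - cs x * (cu x - cv x).
Definition dfun (x : 'rV[R]_4) : R :=
  (c + cu x - cv x) * cs x - ct x * (cu x - cv x).

Definition mdens (x : 'rV[R]_4) : R := nfun x * dfun x.

Definition Omega (x : 'rV[R]_4) : 'M[R]_4 :=
  let a := nfun x * (cs x / ct x) in
  let b := dfun x in
  \matrix_(i < 4, j < 4)
    nth 0 (nth [::] [:: [:: 0;  a; 0; -b];
                       [:: -a; 0; -a; 0];
                       [:: 0;  a; 0; -b];
                       [:: b;  0; b; 0]] i) j.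
End Map.
End Defs.

(** The Jacobian of [phi] is computed entrywise from the differentiation rules
    for rational functions; measure preservation with density [n d] and the
    transformation law [Omega (phi x) = J Omega J^T] are then identities between
    rational functions. [Omega] is [a (du/\ds - ds/\dv) - b (du/\dt + dv/\dt)] with
    [a = n s / t] and [b = d]; as [a] and [b] depend on [u] and [v] only through
    [u - v], the Jacobi identity reduces to [da/du + da/dv = 0 = db/du + db/dv].
    [Omega] only has rank 2, so integrability is proved with the nondegenerate
    structure [Sigma = - t du/\dt - s ds/\dv], also preserved by [phi], and the
    invariants [I1 = (u - v) (u - v + c)] and [I2 = s / t]: they Poisson-commute,
    and their gradients are independent off the hyperplane [2 (u - v) + c = 0]. *)

From Pilot Require Import Defs.
From HB Require Import structures.
From mathcomp Require Import all_boot all_order all_algebra.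
From mathcomp Require Import all_classical all_reals all_analysis.
From mathcomp Require Import ring lra complex.
Import Order.TTheory GRing.Theory Num.Theory.
Import numFieldNormedType.Exports.
Set Implicit Arguments.
Unset Strict Implicit.
Unset Printing Implicit Defensive.

Local Open Scope ring_scope.
Local Open Scope classical_set_scope.

Section PointwiseDerivatives.
Variables (R : realType) (n : nat).
Implicit Types (f g : 'rV[R]_n -> R) (x v : 'rV[R]_n).

Lemma is_deriveDf f g x v df dg : is_derive x v f df -> is_derive x v g dg ->
  is_derive x v (fun y => f y + g y) (df + dg).
Proof. exact: is_deriveD. Qed.

Lemma is_deriveNf f x v df : is_derive x v f df ->
  is_derive x v (fun y => - f y) (- df).
Proof. exact: is_deriveN. Qed.

Lemma is_deriveMf f g x v df dg : is_derive x v f df -> is_derive x v g dg ->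
  is_derive x v (fun y => f y * g y) (f x * dg + g x * df).
Proof. exact: is_deriveM. Qed.

Lemma is_deriveVf f x v df : f x != 0 -> is_derive x v f df ->
  is_derive x v (fun y => (f y)^-1) (- (f x)^-2 * df).
Proof. by move=> fx0 [df_ <-]; split; [exact: derivableV | exact: deriveV]. Qed.

Lemma is_derive_coord (k : 'I_n) x v : is_derive x v (fun y => y 0 k) (v 0 k).
Proof.
have coord_lin : linear (fun y : 'rV[R]_n => y 0 k) by move=> a y z; rewrite !mxE.
pose coord : {linear 'rV[R]_n -> R} :=
  HB.pack (fun y : 'rV[R]_n => y 0 k) (GRing.isLinear.Build _ _ _ _ _ coord_lin).
change (is_derive x v coord (coord v)).
have dcoord : differentiable coord x by exact: differentiable_coord.
split; first exact: diff_derivable.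
by rewrite deriveE // diff_lin //; exact: coord_continuous.
Qed.

Lemma pd_coord (k l : 'I_n) x : pd (fun y => y 0 k) l x = (l == k)%:R.
Proof.
rewrite /pd; have [_ ->] := is_derive_coord k x (delta_mx 0 l).
by rewrite mxE eqxx eq_sym.
Qed.

Lemma pd_of_is_derive F x (g : 'rV[R]_n) :
  (forall v, is_derive x v F (\sum_j g 0 j * v 0 j)) -> forall j, pd F j x = g 0 j.
Proof.
move=> dF j; rewrite /pd; have [_ ->] := dF (delta_mx 0 j).
rewrite (bigD1 j) //= big1 => [|k kj].
  by rewrite mxE !eqxx mulr1 addr0.
by rewrite mxE (negbTE kj) mulr0.
Qed.

Lemma grad_of_is_derive F x (g : 'rV[R]_n) :
  (forall v, is_derive x v F (\sum_j g 0 j * v 0 j)) -> grad F x = g.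
Proof. by move=> dF; apply/rowP => j; rewrite mxE (pd_of_is_derive dF). Qed.

Lemma jacobian_of_is_derive (phi : 'rV[R]_n -> 'rV[R]_n) x (J : 'M[R]_n) :
  (forall i v, is_derive x v (fun y => phi y 0 i) (\sum_j J i j * v 0 j)) ->
  Defs.jacobian phi x = J.
Proof.
move=> dphi; apply/matrixP => i j; rewrite mxE.
have dphi_i v : is_derive x v (fun y => phi y 0 i) (\sum_j row i J 0 j * v 0 j).
  by under eq_bigr do rewrite mxE; exact: dphi.
by rewrite (pd_of_is_derive dphi_i) mxE.
Qed.

Lemma pd_add_eq0_of_shift_invariant F x (k l : 'I_n) :
  differentiable F x ->
  (forall y (h : R), F (h *: (delta_mx 0 k + delta_mx 0 l) + y) = F y) ->
  pd F k x + pd F l x = 0.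
Proof.
move=> dF Finv; rewrite /pd !deriveE // -linearD -deriveE //.
rewrite /derive; under eq_fun do rewrite /= Finv subrr scaler0.
exact: lim_cst.
Qed.

End PointwiseDerivatives.

Ltac derive_rational := repeat first
  [ apply: is_derive_coord | apply: is_derive_cst | apply: is_deriveDf
  | apply: is_deriveNf | apply: is_deriveMf | apply: is_deriveVf ].

Ltac differentiable_rational := repeat first
  [ apply: differentiable_coord | apply: differentiable_cst | apply: differentiableD
  | apply: differentiableN | apply: differentiableM | apply: differentiableV ].

Ltac neq0 := rewrite /=; repeat (apply/andP; split);
  repeat (apply: mulf_neq0 || apply: expf_neq0 || apply: invr_neq0); rewrite ?subr_eq0 //.

Ltac case_ord4 i := case: i => [[|[|[|[|?]]]] ?] //.

Lemma sum_ord4 (V : nmodType) (F : 'I_4 -> V) : \sum_i F i = F 0 + F 1 + F 2 + F 3.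
Proof.
rewrite !big_ord_recl big_ord0 addr0 !addrA.
by congr (F _ + F _ + F _ + F _); apply: val_inj.
Qed.

Lemma det_mx4 (R : comPzRingType) (a : nat -> nat -> R) :
  \det (\matrix_(i < 4, j < 4) a i j) =
    a 0 0 * (a 1 1 * (a 2 2 * a 3 3 - a 2 3 * a 3 2) - a 1 2 * (a 2 1 * a 3 3 - a 2 3 * a 3 1)
             + a 1 3 * (a 2 1 * a 3 2 - a 2 2 * a 3 1))
  - a 0 1 * (a 1 0 * (a 2 2 * a 3 3 - a 2 3 * a 3 2) - a 1 2 * (a 2 0 * a 3 3 - a 2 3 * a 3 0)
             + a 1 3 * (a 2 0 * a 3 2 - a 2 2 * a 3 0))
  + a 0 2 * (a 1 0 * (a 2 1 * a 3 3 - a 2 3 * a 3 1) - a 1 1 * (a 2 0 * a 3 3 - a 2 3 * a 3 0)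
             + a 1 3 * (a 2 0 * a 3 1 - a 2 1 * a 3 0))
  - a 0 3 * (a 1 0 * (a 2 1 * a 3 2 - a 2 2 * a 3 1) - a 1 1 * (a 2 0 * a 3 2 - a 2 2 * a 3 0)
             + a 1 2 * (a 2 0 * a 3 1 - a 2 1 * a 3 0)).
Proof.
rewrite (expand_det_row _ 0) /cofactor !big_ord_recl big_ord0.
do 2 rewrite !(expand_det_row _ 0) /cofactor !big_ord_recl !big_ord0.
rewrite !det_mx11 !mxE /=.
by rewrite !expr0 ?exprS /=; ring.
Qed.

Section Bivectors.
Variable R : comPzRingType.

Definition jacobiator n (P : 'M[R]_n) (dP : 'I_n -> 'M[R]_n) (i j k : 'I_n) : R :=
  \sum_l (P i l * dP l j k + P j l * dP l k i + P k l * dP l i j).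

Definition omega_mx (a b : R) : 'M[R]_4 :=
  \matrix_(i < 4, j < 4)
    nth 0 (nth [::] [:: [:: 0;  a; 0; -b];
                       [:: -a; 0; -a; 0];
                       [:: 0;  a; 0; -b];
                       [:: b;  0; b; 0]] i) j.

Definition sigma_mx (s t : R) : 'M[R]_4 :=
  \matrix_(i < 4, j < 4)
    nth 0 (nth [::] [:: [:: 0; 0; 0; -t];
                       [:: 0; 0; -s; 0];
                       [:: 0; s; 0; 0];
                       [:: t; 0; 0; 0]] i) j.

Lemma omega_mx_lincomb a b : omega_mx a b = a *: omega_mx 1 0 + b *: omega_mx 0 1.
Proof. by apply/matrixP => i j; rewrite !mxE; case_ord4 i; case_ord4 j => /=; ring. Qed.

Lemma sigma_mx_lincomb s t : sigma_mx s t = s *: sigma_mx 1 0 + t *: sigma_mx 0 1.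
Proof. by apply/matrixP => i j; rewrite !mxE; case_ord4 i; case_ord4 j => /=; ring. Qed.

Lemma omega_mx_skew a b : (omega_mx a b)^T = - omega_mx a b.
Proof. by apply/matrixP => i j; rewrite !mxE; case_ord4 i; case_ord4 j => /=; ring. Qed.

Lemma sigma_mx_skew s t : (sigma_mx s t)^T = - sigma_mx s t.
Proof. by apply/matrixP => i j; rewrite !mxE; case_ord4 i; case_ord4 j => /=; ring. Qed.

Lemma omega_mx_jacobi a b (da db : 'I_4 -> R) :
  da 0 + da 2 = 0 -> db 0 + db 2 = 0 ->
  forall i j k, jacobiator (omega_mx a b) (fun l => omega_mx (da l) (db l)) i j k = 0.
Proof.
have -> : (2 : 'I_4) = lift ord0 (lift ord0 ord0) by exact: val_inj.
move=> /eqP; rewrite addr_eq0 => /eqP da2 /eqP; rewrite addr_eq0 => /eqP db2 i j k.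
rewrite /jacobiator !big_ord_recl big_ord0 da2 db2 !mxE /=.
by case_ord4 i; case_ord4 j; case_ord4 k => /=; ring.
Qed.

Lemma sigma_mx_jacobi s t i j k :
  jacobiator (sigma_mx s t) (fun l => sigma_mx (l == 1 :> 'I_4)%:R (l == 3 :> 'I_4)%:R) i j k = 0.
Proof.
rewrite /jacobiator !big_ord_recl big_ord0 !mxE /=.
by case_ord4 i; case_ord4 j; case_ord4 k => /=; ring.
Qed.

Lemma det_sigma_mx s t : \det (sigma_mx s t) = s ^+ 2 * t ^+ 2.
Proof. by rewrite (det_mx4 (fun i j => nth 0 (nth [::] _ i) j)) /=; ring. Qed.

End Bivectors.

Section PoissonBrackets.
Variables (R : realType) (n : nat).
Implicit Types (P : 'rV[R]_n -> 'M[R]_n) (F G a b : 'rV[R]_n -> R) (x : 'rV[R]_n).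

Lemma pbracketC P F G x : (P x)^T = - P x -> pbracket P G F x = - pbracket P F G x.
Proof.
have entry_tr (M : 'M[R]_1) : M 0 0 = M^T 0 0 by rewrite mxE.
move=> skew; rewrite /pbracket [LHS]entry_tr !trmx_mul trmxK skew.
by rewrite mulNmx mulmxN mulmxA mxE.
Qed.

Lemma pbracketxx P F x : (P x)^T = - P x -> pbracket P F F x = 0.
Proof. by move=> /(pbracketC F F) /eqP; rewrite -addr_eq0 -mulr2n mulrn_eq0 => /eqP. Qed.

Lemma lincomb_entry a b (A B : 'M[R]_n) i j :
  (fun y => (a y *: A + b y *: B) i j) = (fun y => a y * A i j + b y * B i j).
Proof. by apply/funext => y; rewrite !mxE. Qed.

Lemma pd_lincomb_entry a b (A B : 'M[R]_n) i j l x :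
  differentiable a x -> differentiable b x ->
  pd (fun y => (a y *: A + b y *: B) i j) l x = pd a l x * A i j + pd b l x * B i j.
Proof.
move=> da db; rewrite lincomb_entry /pd.
have dir_a := derivableP (@diff_derivable _ _ _ _ _ (delta_mx 0 l) da).
have dir_b := derivableP (@diff_derivable _ _ _ _ _ (delta_mx 0 l) db).
have [_ ->] := is_deriveDf (is_deriveMf dir_a (is_derive_cst (A i j) x _))
                           (is_deriveMf dir_b (is_derive_cst (B i j) x _)).
by rewrite /cst; ring.
Qed.

Lemma is_poisson_lincomb a b (A B : 'M[R]_n) (U : set 'rV[R]_n) :
  A^T = - A -> B^T = - B ->
  (forall x, U x -> differentiable a x /\ differentiable b x) ->
  (forall x, U x -> forall i j k,
     jacobiator (a x *: A + b x *: B) (fun l => pd a l x *: A + pd b l x *: B) i j k = 0) ->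
  is_poisson (fun y => a y *: A + b y *: B) U.
Proof.
move=> skewA skewB dab jacobi; split; [|split].
- move=> x /dab [da db] i j; rewrite lincomb_entry.
  by apply: differentiableD; apply: differentiableM => //; exact: differentiable_cst.
- by move=> x _; rewrite linearD !linearZ /= skewA skewB !scalerN opprD.
- move=> x Ux i j k; have [da db] := dab x Ux; rewrite -[RHS](jacobi x Ux i j k).
  by rewrite /jacobiator; apply: eq_bigr => l _ /=; rewrite !pd_lincomb_entry // !mxE.
Qed.

End PoissonBrackets.

Section LatticeMap.
Variables (R : realType) (c : R).
Implicit Types x y : 'rV[R]_4.

Lemma phi_domP x :
  phi_dom x -> [/\ x 0 1 != x 0 3, x 0 3 != 0, x 0 1 != 0 & x 0 0 != x 0 2].
Proof. by case=> ? [? [? ?]]; split. Qed.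

Lemma phi_map_coord y i : phi_map c y 0 i =
  nth 0 [:: y 0 2 + y 0 3 * (c / (y 0 1 - y 0 3));
            (y 0 3)^-1 + c / (y 0 3 * (y 0 0 - y 0 2));
            y 0 0 + y 0 1 * (c / (y 0 1 - y 0 3));
            (y 0 1)^-1 + c / (y 0 1 * (y 0 0 - y 0 2))] i.
Proof. by rewrite mxE. Qed.

Lemma phi_dom_phi_map_neq0 x : phi_dom x -> phi_dom (phi_map c x) -> x 0 0 - x 0 2 + c != 0.
Proof.
case/phi_domP=> _ ht _ huv [_ [_ [s2 _]]].
have -> : x 0 0 - x 0 2 + c = cs (phi_map c x) * (x 0 3 * (x 0 0 - x 0 2)).
  by rewrite /cs phi_map_coord /=; field; neq0.
by neq0.
Qed.

Definition phi_jacobian x : 'M[R]_4 :=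
  let u := x 0 0 in let s := x 0 1 in let v := x 0 2 in let t := x 0 3 in
  \matrix_(i < 4, j < 4) nth 0 (nth [::] [::
  [:: 0; - t * c / (s - t) ^+ 2; 1; c * s / (s - t) ^+ 2];
  [:: - c / (t * (u - v) ^+ 2); 0; c / (t * (u - v) ^+ 2); - t^-2 - c / (t ^+ 2 * (u - v))];
  [:: 1; - c * t / (s - t) ^+ 2; 0; c * s / (s - t) ^+ 2];
  [:: - c / (s * (u - v) ^+ 2); - s^-2 - c / (s ^+ 2 * (u - v)); c / (s * (u - v) ^+ 2); 0]]
  i) j.

Lemma is_derive_phi_map x v i : phi_dom x ->
  is_derive x v (fun y => phi_map c y 0 i) (\sum_j phi_jacobian x i j * v 0 j).
Proof.
case/phi_domP=> hst ht hs huv.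
rewrite (funext (phi_map_coord ^~ i)) sum_ord4 !mxE /=.
by case_ord4 i; (apply: is_derive_eq; [derive_rational; neq0 | rewrite /=; field; neq0]).
Qed.

Lemma jacobian_phi_map x : phi_dom x -> Defs.jacobian (phi_map c) x = phi_jacobian x.
Proof. by move=> Ux; apply: jacobian_of_is_derive => i v; exact: is_derive_phi_map. Qed.

Lemma phi_measure_preserving : measure_preserving (phi_map c) (@phi_dom R) (mdens c).
Proof.
move=> x Ux; rewrite jacobian_phi_map // (det_mx4 (fun i j => nth 0 (nth [::] _ i) j)).
case/phi_domP: Ux => hst ht hs huv.
by rewrite /mdens /nfun /dfun /cu /cs /cv /ct !phi_map_coord /=; field; neq0.
Qed.

Definition omegaA y := nfun c y * (cs y / ct y).
Definition omegaB y := dfun c y.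

Lemma OmegaE : Omega c = fun y => omegaA y *: omega_mx 1 0 + omegaB y *: omega_mx 0 1.
Proof. by apply/funext => y; rewrite -omega_mx_lincomb. Qed.

Lemma differentiable_omegaA x : x 0 3 != 0 -> differentiable omegaA x.
Proof. by move=> ht; rewrite /omegaA /nfun /cu /cs /cv /ct; differentiable_rational. Qed.

Lemma differentiable_omegaB x : differentiable omegaB x.
Proof. by rewrite /omegaB /dfun /cu /cs /cv /ct; differentiable_rational. Qed.

Lemma omega_coeffs_shift_invariant y (h : R) :
  let w := h *: (delta_mx 0 0 + delta_mx 0 2) + y in
  omegaA w = omegaA y /\ omegaB w = omegaB y.
Proof.
rewrite /omegaA /omegaB /nfun /dfun /cu /cs /cv /ct !mxE /=.
by rewrite !(addr0, add0r, mulr0, mulr1); split; ring.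
Qed.

Lemma Omega_poisson : is_poisson (Omega c) (@phi_dom R).
Proof.
rewrite OmegaE; apply: is_poisson_lincomb; try exact: omega_mx_skew.
  by move=> x /phi_domP[_ ht _ _]; split;
    [exact: differentiable_omegaA | exact: differentiable_omegaB].
move=> x /phi_domP[_ ht _ _] i j k.
rewrite -omega_mx_lincomb (_ : (fun l => _) = fun l => omega_mx (pd omegaA l x) (pd omegaB l x)).
  apply: omega_mx_jacobi; apply: pd_add_eq0_of_shift_invariant.
  - exact: differentiable_omegaA.
  - by move=> y h; have [] := omega_coeffs_shift_invariant y h.
  - exact: differentiable_omegaB.
  - by move=> y h; have [] := omega_coeffs_shift_invariant y h.
by apply/funext => l; rewrite -omega_mx_lincomb.
Qed.

Lemma Omega_preserved : preserves_poisson (phi_map c) (@phi_dom R) (Omega c).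
Proof.
move=> x Ux Uphix; have hw := phi_dom_phi_map_neq0 Ux Uphix.
rewrite jacobian_phi_map //; case/phi_domP: Ux => hst ht hs huv.
apply/matrixP => i j; rewrite !mxE !sum_ord4 !mxE !sum_ord4 !mxE.
rewrite /nfun /dfun /cu /cs /cv /ct !phi_map_coord.
by case_ord4 i; case_ord4 j => /=; field; neq0.
Qed.

Definition Sigma y : 'M[R]_4 := sigma_mx (cs y) (ct y).

Lemma Sigma_poisson (U : set 'rV[R]_4) : is_poisson Sigma U.
Proof.
rewrite (_ : Sigma = fun y => cs y *: sigma_mx 1 0 + ct y *: sigma_mx 0 1); last first.
  by apply/funext => y; rewrite -sigma_mx_lincomb.
apply: is_poisson_lincomb; try exact: sigma_mx_skew.
  by move=> x _; split; exact: differentiable_coord.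
move=> x _ i j k; rewrite -sigma_mx_lincomb.
rewrite (_ : (fun l => _) = fun l => sigma_mx (l == 1 :> 'I_4)%:R (l == 3 :> 'I_4)%:R).
  exact: sigma_mx_jacobi.
by apply/funext => l; rewrite /cs /ct !pd_coord -sigma_mx_lincomb.
Qed.

Lemma Sigma_preserved : preserves_poisson (phi_map c) (@phi_dom R) Sigma.
Proof.
move=> x Ux Uphix; have hw := phi_dom_phi_map_neq0 Ux Uphix.
rewrite jacobian_phi_map //; case/phi_domP: Ux => hst ht hs huv.
apply/matrixP => i j; rewrite !mxE !sum_ord4 !mxE !sum_ord4 !mxE.
rewrite /cs /ct !phi_map_coord.
by case_ord4 i; case_ord4 j => /=; field; neq0.
Qed.

Lemma rank_Sigma x : x 0 1 != 0 -> x 0 3 != 0 -> \rank (Sigma x) = 4.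
Proof. by move=> hs ht; apply: mxrank_unit; rewrite unitmxE det_sigma_mx unitfE; neq0. Qed.

Definition I1 y := (cu y - cv y) * (cu y - cv y + c).
Definition I2 y := cs y / ct y.
Definition invariant (a : 'I_2) := nth I1 [:: I1; I2] a.

Lemma invariant_phi_map a x :
  phi_dom x -> phi_dom (phi_map c x) -> invariant a (phi_map c x) = invariant a x.
Proof.
move=> Ux Uphix; have hw := phi_dom_phi_map_neq0 Ux Uphix; case/phi_domP: Ux => hst ht hs huv.
case: a => [[|[|?]] ?] //; rewrite /invariant /I1 /I2 /cu /cs /cv /ct /= !phi_map_coord /=.
  by field; neq0.
by field; neq0.
Qed.

Lemma differentiable_invariant a x : x 0 3 != 0 -> differentiable (invariant a) x.
Proof.
by move=> ht; case: a => [[|[|?]] ?] //; rewrite /invariant /I1 /I2 /cu /cs /cv /ct /=;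
  differentiable_rational; neq0.
Qed.

Lemma grad_I1 x :
  grad I1 x = \row_j [:: 2 * (x 0 0 - x 0 2) + c; 0; - (2 * (x 0 0 - x 0 2) + c); 0]`_j.
Proof.
apply: grad_of_is_derive => v; rewrite sum_ord4 !mxE /=.
by apply: is_derive_eq; [rewrite /I1 /cu /cv; derive_rational | rewrite /=; ring].
Qed.

Lemma grad_I2 x : x 0 3 != 0 ->
  grad I2 x = \row_j [:: 0; (x 0 3)^-1; 0; - x 0 1 / x 0 3 ^+ 2]`_j.
Proof.
move=> ht; apply: grad_of_is_derive => v; rewrite sum_ord4 !mxE /=.
by apply: is_derive_eq; [rewrite /I2 /cs /ct; derive_rational; neq0 | rewrite /=; field].
Qed.

Lemma invariants_in_involution a b x : x 0 3 != 0 ->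
  pbracket Sigma (invariant a) (invariant b) x = 0.
Proof.
move=> ht; have skew := sigma_mx_skew (cs x) (ct x).
have I12 : pbracket Sigma I1 I2 x = 0.
  rewrite /pbracket grad_I1 grad_I2 // /Sigma /cs /ct !mxE !sum_ord4 !mxE !sum_ord4 !mxE /=.
  by field.
case: a => [[|[|?]] ?] //; case: b => [[|[|?]] ?] //; rewrite /invariant /= ?pbracketxx //.
by rewrite pbracketC // I12 oppr0.
Qed.

Lemma row_free_invariant_grads x : x 0 3 != 0 -> 2 * (x 0 0 - x 0 2) + c != 0 ->
  row_free (\matrix_(a < 2) grad (invariant a) x).
Proof.
move=> ht hg.
have pd1 k : pd I1 k x = [:: 2 * (x 0 0 - x 0 2) + c; 0; - (2 * (x 0 0 - x 0 2) + c); 0]`_k.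
  by have := congr1 (fun r : 'rV[R]_4 => r 0 k) (grad_I1 x); rewrite !mxE.
have pd2 k : pd I2 k x = [:: 0; (x 0 3)^-1; 0; - x 0 1 / x 0 3 ^+ 2]`_k.
  by have := congr1 (fun r : 'rV[R]_4 => r 0 k) (grad_I2 ht); rewrite !mxE.
apply/row_freeP.
exists (\matrix_(i < 4, j < 2) nth 0 (nth [::]
  [:: [:: (2 * (x 0 0 - x 0 2) + c)^-1; 0]; [:: 0; x 0 3]; [:: 0; 0]; [:: 0; 0]] i) j).
apply/matrixP => i j; rewrite !mxE sum_ord4 !mxE.
case: i => [[|[|?]] ?] //; rewrite /invariant /= !(pd1, pd2) /=;
  case: j => [[|[|?]] ?] //=; field; neq0.
Qed.

Lemma phi_dom_sub_closure_row_free : @phi_dom R `<=`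
  closure [set x | phi_dom x /\ row_free (\matrix_(a < 2) grad (invariant a) x)].
Proof.
move=> x Ux; have [hst ht hs huv] := phi_domP Ux.
have [g0|gn0] := eqVneq (2 * (x 0 0 - x 0 2) + c) 0; last first.
  by apply: subset_closure; split => //; exact: row_free_invariant_grads.
move=> B nB.
have moveB : (fun h : R => h *: delta_mx 0 0 + x) @ 0 --> x.
  rewrite -[x in _ --> x]add0r -(scale0r (delta_mx 0 0 : 'rV[R]_4)).
  by apply: cvgD; [exact: scalel_continuous | exact: cvg_cst].
have near_B : \forall h \near 0^', B (h *: delta_mx 0 0 + x) := nbhs_dnbhs (moveB B nB).
have uv_pos : 0 < `|x 0 0 - x 0 2| by rewrite normr_gt0 subr_eq0.
have near_small := @dnbhs0_lt _ R _ uv_pos.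
have [h [[hB hsmall] hnz]] :=
  filter_ex (filterI (filterI near_B near_small) (@nbhs_dnbhs_neq R 0)).
exists (h *: delta_mx 0 0 + x); split => //.
have huv' : h + x 0 0 - x 0 2 != 0.
  apply: contraTneq hsmall => E; rewrite (_ : h = x 0 2 - x 0 0); last by lra.
  by rewrite -opprB normrN ltxx.
have hg' : 2 * (h + x 0 0 - x 0 2) + c != 0.
  have -> : 2 * (h + x 0 0 - x 0 2) + c = 2 * h + (2 * (x 0 0 - x 0 2) + c) by ring.
  by rewrite g0 addr0 mulf_neq0 // pnatr_eq0.
have y0 : (h *: delta_mx 0 0 + x) 0 0 = h + x 0 0 by rewrite !mxE /= mulr1.
have yk k : k != 0 -> (h *: delta_mx 0 0 + x) 0 k = x 0 k.
  by move=> k0; rewrite !mxE (negbTE k0) mulr0 add0r.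
split; last by apply: row_free_invariant_grads; rewrite ?y0 ?yk // addrA.
by rewrite /phi_dom /cu /cs /cv /ct /= y0 !yk //; do !split => //; rewrite -subr_eq0.
Qed.

Lemma phi_liouville_integrable : liouville_integrable (phi_map c) (@phi_dom R).
Proof.
exists Sigma, 2%N; split; first exact: Sigma_poisson.
split; first exact: Sigma_preserved.
split; first by move=> x _; exact: rank_leq_col.
split.
  exists (\row_(i < 4) [:: 1; 2; 0; 1]`_i).
  have [one2 one0 two0] : [/\ (1 : R) != 2, (1 : R) != 0 & (2 : R) != 0].
    by split; apply/eqP; lra.
  split; last by rewrite rank_Sigma // mxE.
  by rewrite /phi_dom /= /cu /cs /cv /ct !mxE /= eq_sym.
exists invariant; split; [|split; [|split]].
- by move=> a x /phi_domP[_ ht _ _]; exact: differentiable_invariant.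
- exact: invariant_phi_map.
- exact: phi_dom_sub_closure_row_free.
- by move=> a b x /phi_domP[_ ht _ _]; exact: invariants_in_involution.
Qed.

End LatticeMap.

Theorem proposition3p2 (R : realType) (p q : R[i])
    (hpq : complex.Im (p - q) = 0) :
  let c := complex.Re (p - q) in
  measure_preserving (phi_map c) (@phi_dom R) (mdens c) /\
  (is_poisson (Omega c) (@phi_dom R) /\
   preserves_poisson (phi_map c) (@phi_dom R) (Omega c)) /\
  liouville_integrable (phi_map c) (@phi_dom R).
Proof.
move=> c; split; first exact: phi_measure_preserving.
split; last exact: phi_liouville_integrable.
by split; [exact: Omega_poisson | exact: Omega_preserved].
Qed.
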